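(* Let $(\mathcal{X},\rho)$ be a length space and $c:\mathcal{X}\to\mathcal{Y}$ a classifier. Then for every $x\in\mathcal{X}$, $$m_c(x)=\rho(x,\partial\mathcal{X}).$$
   Context: A metric space $(\mathcal{X},\rho)$ is a length space if for all $x,x'$, $\rho(x,x')=\inf_\gamma \ell(\gamma)$, the infimum over continuous paths $\gamma:[0,1]\to\mathcal{X}$ from $x$ to $x'$ and $\ell(\gamma)$ the length of $\gamma$. Margin $m_c(x)=\inf_{x':c(x')\neq c(x)}\rho(x,x')$; $\partial\mathcal{X}=\{x:m_c(x)=0\}$; $\rho(x,A)=\inf_{a\in A}\rho(x,a)$; infima over empty sets are $+\infty$. *)

From HB Require Import structures.
From mathcomp Require Import all_boot all_order all_algebra.
From mathcomp Require Import all_classical all_reals ereal.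
Local Close Scope ereal_scope.
Set Implicit Arguments. Unset Strict Implicit. Unset Printing Implicit Defensive.
Import Order.TTheory GRing.Theory Num.Theory.
Local Open Scope classical_set_scope.
Local Open Scope ring_scope.

Section Defs.
Variables (R : realType) (X : Type).

Definition is_metric (rho : X -> X -> R) : Prop :=
  (forall x y, 0 <= rho x y) /\
  (forall x y, rho x y = 0 <-> x = y) /\
  (forall x y, rho x y = rho y x) /\
  (forall x y z, rho x z <= rho x y + rho y z).

Definition path_continuous (rho : X -> X -> R) (gamma : R -> X) : Prop :=
  forall t, 0 <= t <= 1 -> forall e, 0 < e -> exists2 d, 0 < d &
    forall s, 0 <= s <= 1 -> `|s - t| < d -> rho (gamma t) (gamma s) < e.

Definition is_path (rho : X -> X -> R) (x x' : X) (gamma : R -> X) : Prop :=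
  path_continuous rho gamma /\ gamma 0 = x /\ gamma 1 = x'.

Definition is_partition (n : nat) (t : nat -> R) : Prop :=
  t 0%N = 0 /\ t n = 1 /\ (forall i, (i < n)%N -> t i <= t i.+1).

Definition path_length (rho : X -> X -> R) (gamma : R -> X) : \bar R :=
  ereal_sup [set l : \bar R | exists (n : nat) (t : nat -> R),
    is_partition n t /\
    l = ((\sum_(i < n) rho (gamma (t i)) (gamma (t i.+1)))%:E)%E].

Definition is_length_space (rho : X -> X -> R) : Prop :=
  is_metric rho /\
  forall x x', (rho x x')%:E =
    ereal_inf [set path_length rho gamma | gamma in is_path rho x x'].

(* distance from a point to a set (inf over empty set = +oo) *)
Definition dist_set (rho : X -> X -> R) (x : X) (A : set X) : \bar R :=
  ereal_inf [set (rho x a)%:E | a in A].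

Variable Y : Type.

Definition margin (rho : X -> X -> R) (c : X -> Y) (x : X) : \bar R :=
  dist_set rho x [set x' | c x' <> c x].

Definition boundary (rho : X -> X -> R) (c : X -> Y) : set X :=
  [set x | margin rho c x = 0%E].

End Defs.

From HB Require Import structures.
From mathcomp Require Import all_boot all_order all_algebra.
From mathcomp Require Import all_classical all_reals ereal.
From mathcomp Require Import lra.
Set Implicit Arguments. Unset Strict Implicit. Unset Printing Implicit Defensive.
Import Order.TTheory GRing.Theory Num.Theory.
Local Open Scope classical_set_scope.
Local Open Scope ring_scope.

(* - [margin0P] characterises boundary points: z lies on the boundary iff
     points of another class come arbitrarily close to z.
   - [margin_le_dist_boundary] (any metric space): if b is on the boundary,
     a point y close to b of class different from b gives, by the triangle
     inequality, m_c(x) <= rho(x,b) + e (either c b <> c x, or c y <> c x).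
   - [path_crosses_boundary]: a continuous path whose endpoints have
     different classes meets the boundary, at the first time
     s = inf {t | c (gamma t) <> c (gamma 0)} it leaves the initial class.
   - [path_length_ge_split]: the length of a path dominates the two-piece
     polygon through any intermediate point.
   - [dist_boundary_le_margin] (length spaces): for x' of another class take
     a path from x to x' of length < rho(x,x') + e; the boundary point on it
     is at distance at most that length from x. *)

Section MetricMargin.
Context {R : realType} {X Y : Type} {rho : X -> X -> R} {c : X -> Y}.
Hypothesis hm : is_metric rho.

Lemma margin_ge0 z : (0 <= margin rho c z)%E.
Proof. by apply/ereal_infP => _ [a _ <-]; rewrite lee_fin; exact: hm.1. Qed.

Lemma margin_le z y : c y <> c z -> (margin rho c z <= (rho z y)%:E)%E.
Proof. by move=> hy; apply: ereal_inf_lbound; exists y. Qed.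

Lemma margin0P z : margin rho c z = 0%E <->
  forall e, 0 < e -> exists2 y, c y <> c z & rho z y < e.
Proof.
split=> [hz e e0|happrox].
- have : (margin rho c z < e%:E)%E by rewrite hz lte_fin.
  by case/ereal_inf_lt => _ [y hy <-]; rewrite lte_fin; exists y.
- apply: le_anti; rewrite margin_ge0 andbT.
  apply/lee_addgt0Pr => e e0; rewrite add0e.
  have [y hy hzy] := happrox e e0.
  by apply: le_trans (margin_le hy) _; rewrite lee_fin ltW.
Qed.

Lemma margin_le_dist_boundary x :
  (margin rho c x <= dist_set rho x (boundary rho c))%E.
Proof.
have [_ [_ [_ htri]]] := hm.
apply/ereal_infP => _ [b /margin0P hb <-].
apply/lee_addgt0Pr => e e0.
have [y hyb hby] := hb e e0.
have [hbx|hbx] := boolp.pselect (c b = c x).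
- have hyx : c y <> c x by rewrite -hbx.
  apply: le_trans (margin_le hyx) _; rewrite -EFinD lee_fin.
  by apply: le_trans (htri x b y) _; rewrite lerD2l ltW.
- by apply: le_trans (margin_le hbx) _; rewrite -EFinD lee_fin lerDl ltW.
Qed.

(* A continuous path joining two classes meets the boundary, namely at the
   first time it leaves the class of its starting point. *)
Lemma path_crosses_boundary (g : R -> X) :
  path_continuous rho g -> c (g 1) <> c (g 0) ->
  exists2 s, 0 <= s <= 1 & boundary rho c (g s).
Proof.
move=> gc g01.
pose T := [set t : R | 0 <= t <= 1 /\ c (g t) <> c (g 0)].
have hT1 : T 1 by split; rewrite ?ler01 ?lexx.
have hTn : T !=set0 by exists 1.
have hlb : has_lbound T by exists 0 => t [/andP[]].
pose s := inf T.
have s0 : 0 <= s by apply: lb_le_inf => // t [/andP[]].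
have s1 : s <= 1 by exact: ge_inf.
have before_s t : 0 <= t -> t < s -> c (g t) = c (g 0).
  move=> t0 ts; apply: contrapT => hne.
  have : s <= t by apply: ge_inf => //; split => //; rewrite t0 /=; lra.
  lra.
exists s; first by rewrite s0 s1.
apply/margin0P => e e0.
have [d d0 hd] := gc s ltac:(by rewrite s0 s1) e e0.
have [hs|hs] := boolp.pselect (c (g s) = c (g 0)).
- (* approach s from the right by times of T *)
  have : inf T < s + d by rewrite ltrDl.
  case/(inf_lt hTn) => t [/andP[t0 t1] ht] tlt.
  have st : s <= t by apply: ge_inf => //; split => //; rewrite t0.
  exists (g t); first by rewrite hs.
  by apply: hd; rewrite ?t0 ?t1 // ger0_norm; lra.
- (* s > 0, and times just before s lie in the initial class *)
  have sp : 0 < s.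
    by rewrite lt0r s0 andbT; apply/eqP => s00; apply: hs; rewrite s00.
  pose t := Num.max 0 (s - d / 2).
  have t0 : 0 <= t by rewrite le_max lexx.
  have ts : t < s by rewrite gt_max sp /=; lra.
  have htd : `|t - s| < d.
    have : s - d / 2 <= t by rewrite le_max lexx orbT.
    by rewrite ler0_norm; lra.
  exists (g t); first by rewrite (before_s t t0 ts) => /esym.
  by apply: hd => //; rewrite t0 /=; lra.
Qed.

End MetricMargin.

Lemma path_length_ge_split (R : realType) (X : Type) (rho : X -> X -> R)
    (g : R -> X) (s : R) : 0 <= s <= 1 ->
  ((rho (g 0) (g s) + rho (g s) (g 1))%:E <= path_length rho g)%E.
Proof.
move=> /andP[s0 s1].
pose t i : R := if i == 0%N then 0 else if i == 1%N then s else 1.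
have ht : is_partition 2 t by do 2 split=> //; move=> [|[|i]] //= _.
apply: ereal_sup_ubound; exists 2%N, t; split => //.
by rewrite big_ord_recr big_ord_recr big_ord0 /= add0r.
Qed.

Lemma dist_boundary_le_margin (R : realType) (X Y : Type)
    (rho : X -> X -> R) (c : X -> Y) (hlen : is_length_space rho) (x : X) :
  (dist_set rho x (boundary rho c) <= margin rho c x)%E.
Proof.
have [hm hgeo] := hlen.
apply/ereal_infP => _ [x' hx' <-].
apply/lee_addgt0Pr => e e0.
have : (ereal_inf [set path_length rho gamma | gamma in is_path rho x x']
          < (rho x x' + e)%:E)%E by rewrite -hgeo lte_fin ltrDl.
case/ereal_inf_lt => _ [g [gc [g0 g1]] <-] hshort.
have [|s s01 hs] := path_crosses_boundary (c := c) hm gc; first by rewrite g0 g1.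
have hgs : [set (rho x b)%:E | b in boundary rho c] (rho x (g s))%:E.
  by exists (g s).
apply: le_trans (ereal_inf_lbound hgs) _.
apply: le_trans (ltW hshort).
apply: le_trans (path_length_ge_split rho g s01).
by rewrite g0 lee_fin lerDl; exact: hm.1.
Qed.

Theorem lemma8 (R : realType) (X Y : Type) (rho : X -> X -> R) (c : X -> Y)
  (hlen : is_length_space rho) (x : X) :
  margin rho c x = dist_set rho x (boundary rho c).
Proof.
apply: le_anti; apply/andP; split.
- exact: margin_le_dist_boundary hlen.1 x.
- exact: dist_boundary_le_margin.
Qed.
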